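(* Let $M$ be a combinational Boolean circuit with set of internal variables $X$, set of input variables $V$ and set of output variables $W$, and let $F(X,V,W)$ be a CNF formula specifying $M$. Let $B(W)$ be a clause over variables of $W$, let $C \in F$ be a clause, and let $H(V)$ be a CNF formula over variables of $V$ such that $$\exists X\,\exists W\,[F \wedge B] \;\equiv\; H \wedge \exists X\,\exists W\,[(F \setminus \{C\}) \wedge B].$$ Let $Q(V)$ be a clause of $H$. Then for every full assignment $\mathbf{v}$ to $V$ that falsifies $Q$, the output assignment $\mathbf{w}$ produced by $M$ on input $\mathbf{v}$ falsifies the clause $B$.
   Context: A CNF formula is identified with the set of its clauses, so $F\setminus\{C\}$ is $F$ with clause $C$ removed. $F$ specifies $M$ means $F = F_{G_1}\wedge\dots\wedge F_{G_k}$, where $G_1,\dots,G_k$ are the gates of $M$ and $F_{G_i}$ is the standard (Tseitin) CNF encoding of gate $G_i$, so that the assignments to $X\cup V\cup W$ satisfying $F$ are exactly the consistent assignments to all gates of $M$, i.e., exactly the execution traces $(\mathbf{x},\mathbf{v},\mathbf{w})$ of $M$ (for each input $\mathbf{v}$ there is exactly one such trace). Two formulas possibly containing existential quantifiers are equivalent ($\equiv$) if they evaluate to the same value under every full assignment to their free variables. *)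

From mathcomp Require Import all_boot.
Set Implicit Arguments. Unset Strict Implicit. Unset Printing Implicit Defensive.

Definition var := nat.
Definition assignment := var -> bool.

(** A literal (x, b) is satisfied by [a] iff [a x = b]: (x,true) is x, (x,false) is ~x. *)
Definition literal := (var * bool)%type.
Definition clause := seq literal.
(** A CNF formula, identified with the set of its clauses. *)
Definition cnf := seq clause.

Definition lit_sat (a : assignment) (l : literal) : bool := a l.1 == l.2.
Definition clause_sat (a : assignment) (C : clause) : bool := has (lit_sat a) C.
Definition cnf_sat (a : assignment) (F : cnf) : bool := all (clause_sat a) F.

Definition clause_vars (C : clause) : seq var := map fst C.
Definition cnf_vars (F : cnf) : seq var := flatten (map clause_vars F).

Definition cnf_remove (F : cnf) (C : clause) : cnf := filter (predC1 C) F.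

(** [exists Y, phi] evaluated at the full assignment [a]: some assignment
    agreeing with [a] outside Y satisfies phi. *)
Definition ex_sat (Y : seq var) (phi : cnf) (a : assignment) : Prop :=
  exists a' : assignment, (forall x, x \notin Y -> a' x = a x) /\ cnf_sat a' phi.

Record gate := Gate { g_out : var; g_ins : seq var; g_fun : seq bool -> bool }.

Definition gate_consistent (a : assignment) (G : gate) : bool :=
  a (g_out G) == g_fun G (map a (g_ins G)).

(** A combinational circuit: internal vars X, inputs V, outputs W, and gates
    listed in topological order. *)
Record circuit := Circuit {
  c_X : seq var; c_V : seq var; c_W : seq var; c_gates : seq gate }.

Definition gate_outs (M : circuit) : seq var := map g_out (c_gates M).

Definition circuit_wf (M : circuit) : Prop :=
  [/\ uniq (gate_outs M),
      (forall x, x \in gate_outs M = (x \in c_X M) || (x \in c_W M)),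
      (forall x, x \in c_V M -> (x \notin c_X M) && (x \notin c_W M)),
      (forall x, x \in c_X M -> x \notin c_W M) &
      (forall i, i < size (c_gates M) ->
        forall y, y \in g_ins (nth (Gate 0 [::] (fun _ => false)) (c_gates M) i) ->
          (y \in c_V M) || (y \in take i (gate_outs M)))].

(** Simulation of the circuit: evaluate gates in order, starting from
    the assignment [v] (whose values on V are the inputs). *)
Definition update (a : assignment) (x : var) (b : bool) : assignment :=
  fun y => if y == x then b else a y.

Definition eval_gate (a : assignment) (G : gate) : assignment :=
  update a (g_out G) (g_fun G (map a (g_ins G))).

(** The execution trace (x, v, w) of M on input v (values on X, V, W). *)
Definition run (M : circuit) (v : assignment) : assignment :=
  foldl eval_gate v (c_gates M).

Definition encodes_gate (G : gate) (FG : cnf) : Prop :=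
  {subset cnf_vars FG <= g_out G :: g_ins G} /\
  (forall a : assignment, cnf_sat a FG = gate_consistent a G).

Definition specifies (F : cnf) (M : circuit) : Prop :=
  exists FGs : seq cnf,
    size FGs = size (c_gates M) /\
    (forall i, i < size FGs -> encodes_gate (nth (Gate 0 [::] (fun _ => false)) (c_gates M) i)
                                            (nth [::] FGs i)) /\
    F =i flatten FGs.

(* The execution trace of M on v satisfies every gate encoding, hence F. If it
   also satisfied B, it would witness the left-hand side of the equivalence at
   itself, so it would satisfy H. As H only mentions inputs, on which the trace
   agrees with v, v would satisfy H and in particular Q. *)

From mathcomp Require Import all_boot.

Set Implicit Arguments.
Unset Strict Implicit.

Local Notation gate0 := (Gate 0 [::] (fun _ => false)).

Lemma clause_sat_eq_on (a b : assignment) (Q : clause) :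
  {in clause_vars Q, a =1 b} -> clause_sat a Q = clause_sat b Q.
Proof.
move=> ab; apply: eq_in_has => l lQ.
by rewrite /lit_sat ab //; apply: map_f.
Qed.

Lemma mem_cnf_vars (H : cnf) (Q : clause) :
  Q \in H -> {subset clause_vars Q <= cnf_vars H}.
Proof. by move=> QH x xQ; apply/flattenP; exists (clause_vars Q); rewrite ?map_f. Qed.

Lemma foldl_eval_gate_notin (gs : seq gate) (a : assignment) (x : var) :
  x \notin map g_out gs -> foldl eval_gate a gs x = a x.
Proof.
elim: gs a => [|g gs IH] a //=.
rewrite in_cons negb_or => /andP[xg xgs].
by rewrite IH // /eval_gate /update (negbTE xg).
Qed.

Lemma foldl_eval_gate_take (gs : seq gate) (a : assignment) (k : nat) (x : var) :
  x \notin map g_out (drop k gs) ->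
  foldl eval_gate a gs x = foldl eval_gate a (take k gs) x.
Proof.
by move=> xk; rewrite -{1}(cat_take_drop k gs) foldl_cat foldl_eval_gate_notin.
Qed.

Section WellFormedCircuit.

Variable M : circuit.
Hypothesis wfM : circuit_wf M.

Lemma input_notin_gate_outs (x : var) : x \in c_V M -> x \notin gate_outs M.
Proof.
case: wfM => _ outs inputs _ _ xV.
by rewrite outs; case/andP: (inputs x xV) => /negbTE -> /negbTE ->.
Qed.

Lemma run_on_inputs (v : assignment) (x : var) : x \in c_V M -> run M v x = v x.
Proof. by move=> xV; rewrite /run foldl_eval_gate_notin ?input_notin_gate_outs. Qed.

Variable i : nat.
Hypothesis ltiM : i < size (c_gates M).
Local Notation G := (nth gate0 (c_gates M) i).

Lemma gate_outs_drop : drop i (gate_outs M) = g_out G :: drop i.+1 (gate_outs M).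
Proof.
by rewrite (drop_nth (g_out gate0)) ?size_map // (nth_map gate0).
Qed.

Lemma gate_out_notin_later : g_out G \notin drop i.+1 (gate_outs M).
Proof.
case: wfM => uniq_outs _ _ _ _.
by move: (drop_uniq i uniq_outs); rewrite gate_outs_drop => /andP[].
Qed.

Lemma gate_in_notin_current (y : var) :
  y \in g_ins G -> y \notin drop i (gate_outs M).
Proof.
case: wfM => uniq_outs _ _ _ ins_earlier yG.
case/orP: (ins_earlier i ltiM y yG) => [yV | y_earlier].
  exact: contra (@mem_drop _ _ _ _) (input_notin_gate_outs yV).
move: uniq_outs; rewrite -{1}(cat_take_drop i (gate_outs M)) cat_uniq.
by case/and3P=> _ /hasPn/(_ y) disj _; exact: contraL disj y_earlier.
Qed.

(* The gate reads values fixed before step i and its output is never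
   overwritten after step i. *)
Lemma run_gate_consistent (v : assignment) : gate_consistent (run M v) G.
Proof.
set before := foldl eval_gate v (take i (c_gates M)).
have out_val : run M v (g_out G) = g_fun G (map before (g_ins G)).
  rewrite /run (@foldl_eval_gate_take _ _ i.+1); last first.
    by rewrite map_drop; exact: gate_out_notin_later.
  by rewrite (take_nth gate0) // foldl_rcons /eval_gate /update eqxx.
rewrite /gate_consistent out_val; apply/eqP; congr (g_fun G _).
apply/eq_in_map => y yG.
by rewrite /run (@foldl_eval_gate_take _ _ i) // map_drop gate_in_notin_current.
Qed.

End WellFormedCircuit.

Lemma run_sat_spec (M : circuit) (F : cnf) (v : assignment) :
  circuit_wf M -> specifies F M -> cnf_sat (run M v) F.
Proof.
move=> wfM [FGs [sizeFGs [encFGs defF]]].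
apply/allP => c; rewrite defF => /flattenP[FG FGin cFG].
have ltFG : index FG FGs < size FGs by rewrite index_mem.
case: (encFGs _ ltFG) => _ encFG.
have := @run_gate_consistent M wfM (index FG FGs).
rewrite -sizeFGs => /(_ ltFG v); rewrite -encFG nth_index // => /allP; apply.
exact: cFG.
Qed.

Theorem proposition3 (M : circuit) (F : cnf) (B : clause) (C : clause) (H : cnf)
  (Q : clause) :
  circuit_wf M ->
  specifies F M ->
  {subset clause_vars B <= c_W M} ->
  C \in F ->
  {subset cnf_vars H <= c_V M} ->
  (forall a : assignment,
     ex_sat (c_X M ++ c_W M) (B :: F) a <->
     cnf_sat a H /\ ex_sat (c_X M ++ c_W M) (B :: cnf_remove F C) a) ->
  Q \in H ->
  forall v : assignment, ~~ clause_sat v Q -> ~~ clause_sat (run M v) B.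
Proof.
move=> wfM specF _ _ H_inputs equiv QH v; apply: contra => trace_B.
have trace_H : cnf_sat (run M v) H.
  apply: (proj1 ((equiv (run M v)).1 _)).
  by exists (run M v); split=> //=; rewrite trace_B run_sat_spec.
rewrite (@clause_sat_eq_on v (run M v)); first exact: (allP trace_H).
by move=> x /(mem_cnf_vars QH)/H_inputs xV; rewrite (run_on_inputs wfM).
Qed.
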